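(* Let $k\geq 3$ and let $G$ be a diregular $(2,k,+3)$-digraph. Let $u,v$ be distinct vertices with exactly one common out-neighbour $u_2$, and write $N^+(u)=\{u_1,u_2\}$, $N^+(v)=\{v_1,u_2\}$. If $w\in T(v_1)$, then either $w\in\{u\}\cup O(u)$, or $w\in T(u_1)$ with $d(u_1,w)=k-1$, or $w\in T(u_1)$ with $d(u_1,w)\leq d(v_1,w)$.
   Context: A digraph is $k$-geodetic if for every ordered pair of vertices $x,y$ there is at most one directed path from $x$ to $y$ of length at most $k$ (the trivial path counts). A diregular $(2,k,+3)$-digraph is a $k$-geodetic digraph of order $1+2+\dots+2^k+3$ in which every vertex has in- and out-degree $2$. $N^+(x)$ is the set of out-neighbours of $x$. $d(x,y)$ is the directed distance; $T(x)=\{y: d(x,y)\leq k-1\}$; $O(x)=\{y: d(x,y)\geq k+1\}$ is the outlier set of $x$. *)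

From mathcomp Require Import all_boot.
Set Implicit Arguments. Unset Strict Implicit. Unset Printing Implicit Defensive.

Section Digraph.
Variables (V : finType) (e : rel V).

Definition outN (x : V) : {set V} := [set y | e x y].
Definition inN (x : V) : {set V} := [set y | e y x].

Definition diregular (d : nat) : Prop :=
  forall x : V, #|outN x| = d /\ #|inN x| = d.

(* a directed walk from x to y of length n: sequence p of successive
   vertices after x, with size p = n (the trivial path is p = [::]) *)
Definition is_walk (x y : V) (p : seq V) : bool := path e x p && (last x p == y).

Definition k_geodetic (k : nat) : Prop :=
  forall (x y : V) (p q : seq V),
    is_walk x y p -> size p <= k -> is_walk x y q -> size q <= k -> p = q.

Fixpoint reachn (n : nat) (x y : V) : bool :=
  if n is n'.+1 then [exists z, e x z && reachn n' z y] else x == y.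

(* directed distance: Some n = length of a shortest walk, None = unreachable
   (a shortest walk has length < #|V|) *)
Definition dist (x y : V) : option nat :=
  let m := find (fun n => reachn n x y) (iota 0 #|V|) in
  if m < #|V| then Some m else None.

Definition Tset (k : nat) (x : V) : {set V} :=
  [set y | if dist x y is Some n then n <= k.-1 else false].

(* O(x) = {y : d(x,y) >= k+1} (unreachable vertices have infinite distance) *)
Definition Oset (k : nat) (x : V) : {set V} :=
  [set y | if dist x y is Some n then k.+1 <= n else true].

End Digraph.

From mathcomp Require Import all_boot zify.
Set Implicit Arguments. Unset Strict Implicit. Unset Printing Implicit Defensive.

(* In a k-geodetic digraph of out-degree 2 every ball of radius j <= k has
   exactly 1 + 2 + ... + 2^j vertices; with order 1 + ... + 2^k + 3 this leaves
   three outliers, so |{x} u O(x)| = 4 for every x.  If N+(u) = {u1,u2} and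
   N+(v) = {v1,u2}, geodeticity forces T(v1) \ T(u1) into {u} u O(u) and
   T(u1) \ T(v1) into {v} u O(v).  Now suppose d(v1,w) < d(u1,w) = a < k-1.
   The 2^(k-a) >= 4 vertices at distance k-a from w lie at distance exactly k
   from u1 but at distance <= k-1 from v1, so they fill T(v1) \ T(u1), and v1
   is not among them; hence v1 is in T(u1).  The two differences have equal
   size, so T(u1) \ T(v1) = {v} u O(v) and v is in T(u1) as well.  As
   d(u1,v1) = d(u1,v) + 1 <= k-1, the walk u -> u1 ~> v -> u2 has length <= k
   and competes with the edge u -> u2. *)

Section Walks.
Variables (V : finType) (e : rel V).

Lemma reachn_cat m n x y z :
  reachn e m x y -> reachn e n y z -> reachn e (m + n) x z.
Proof.
elim: m x => [|m IH] x /=; first by move/eqP->.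
case/existsP=> t /andP[ext Hty] Hyz; apply/existsP; exists t.
by rewrite ext (IH _ Hty Hyz).
Qed.

Lemma reachn1 x y : e x y -> reachn e 1 x y.
Proof. by move=> exy; apply/existsP; exists y; rewrite exy /=. Qed.

Lemma reachn_walk n x y :
  reachn e n x y -> exists2 p, size p = n & is_walk e x y p.
Proof.
elim: n x => [|n IH] x /=.
  by move/eqP->; exists [::]; rewrite /is_walk /= ?eqxx.
case/existsP=> t /andP[ext /IH[p <- Hp]].
by exists (t :: p); rewrite // /is_walk /= ext.
Qed.

Lemma outN2_edges x a b : outN e x = [set a; b] -> e x a /\ e x b.
Proof. by move=> Hx; move: (set21 a b) (set22 a b); rewrite -Hx !inE. Qed.

Definition sphere n x : {set V} := [set y | reachn e n x y].

Definition ball n x : {set V} := [set y | [exists i : 'I_n.+1, reachn e i x y]].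

Lemma ballP n x y :
  reflect (exists2 i, i <= n & reachn e i x y) (y \in ball n x).
Proof.
rewrite inE; apply: (iffP existsP) => [[i Hi] | [i Hin Hi]].
  by exists i; rewrite // -ltnS.
by exists (Ordinal (Hin : i < n.+1)).
Qed.

Lemma mem_ball n x : x \in ball n x.
Proof. by apply/ballP; exists 0; rewrite /= ?eqxx. Qed.

Lemma sphere0 x : sphere 0 x = [set x].
Proof. by apply/setP=> y; rewrite !inE eq_sym. Qed.

Lemma ball0 x : ball 0 x = [set x].
Proof.
apply/setP=> y; rewrite -sphere0 [y \in sphere 0 x]inE.
by apply/ballP/idP => [[[|i] //] | ]; exists 0.
Qed.

Lemma ballS n x : ball n.+1 x = ball n x :|: sphere n.+1 x.
Proof.
apply/setP=> y; rewrite in_setU [y \in sphere _ _]inE; apply/ballP/orP => [[i] | [/ballP[i] | Hy]].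
- by rewrite leq_eqVlt ltnS => /orP[/eqP-> | Hi Hy]; [right | left; apply/ballP; exists i].
- by exists i => //; apply: leqW.
- by exists n.+1.
Qed.

Lemma sphereS n x (Nx : {set V}) : outN e x = Nx ->
  sphere n.+1 x = \bigcup_(z in Nx) sphere n z.
Proof.
move=> <-; apply/setP=> y; rewrite inE /=; apply/existsP/bigcupP.
  by case=> z /andP[exz Hzy]; exists z; rewrite inE.
by case=> z; rewrite !inE => exz Hzy; exists z; rewrite exz.
Qed.

Lemma dist_Some n x y : dist e x y = Some n -> reachn e n x y.
Proof.
rewrite /dist; case: ifP => // Hm [<-].
have Hh : has (fun n => reachn e n x y) (iota 0 #|V|) by rewrite has_find size_iota.
by have := nth_find 0 Hh; rewrite nth_iota.
Qed.

Lemma dist_leq i x y : i < #|V| -> reachn e i x y ->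
  exists2 m, dist e x y = Some m & m <= i.
Proof.
move=> Hi Hr; pose m := find (fun n => reachn e n x y) (iota 0 #|V|).
have Hm : m <= i.
  rewrite leqNgt; apply/negP=> /(before_find 0).
  by rewrite nth_iota // add0n Hr.
by exists m; rewrite // /dist ifT ?(leq_ltn_trans Hm).
Qed.

Lemma dist_leq_ball n x y : n < #|V| ->
  (if dist e x y is Some m then m <= n else false) = (y \in ball n x).
Proof.
move=> Hn; case Hd: (dist e x y) => [m|]; apply/idP/ballP => //.
- by move=> Hm; exists m; rewrite ?dist_Some.
- case=> i Hi /(dist_leq (leq_ltn_trans Hi Hn))[m'].
  by rewrite Hd => -[->] /leq_trans; apply.
- case=> i Hi /(dist_leq (leq_ltn_trans Hi Hn))[m'].
  by rewrite Hd.
Qed.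

Lemma Tset_ball k x : k < #|V| -> Tset e k x = ball k.-1 x.
Proof.
by move=> Hk; apply/setP=> y; rewrite inE dist_leq_ball // (leq_ltn_trans (leq_pred k)).
Qed.

Lemma Oset_ball k x : k < #|V| -> Oset e k x = ~: ball k x.
Proof.
move=> Hk; apply/setP=> y; rewrite inE in_setC -dist_leq_ball //.
by case: (dist e x y) => // m; rewrite ltnNge.
Qed.

Section Geodetic.
Variable k : nat.
Hypothesis geo : k_geodetic e k.

Lemma reachn_uniq m n x y :
  m <= k -> n <= k -> reachn e m x y -> reachn e n x y -> m = n.
Proof.
move=> Hm Hn /reachn_walk[p Hps Hp] /reachn_walk[q Hqs Hq].
by rewrite -Hps -Hqs (geo Hp _ Hq) ?Hps ?Hqs.
Qed.

Lemma reachn_out_uniq x z1 z2 i j y : e x z1 -> e x z2 -> i < k -> j < k ->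
  reachn e i z1 y -> reachn e j z2 y -> z1 = z2.
Proof.
move=> exz1 exz2 Hi Hj /reachn_walk[p Hps Hp] /reachn_walk[q Hqs Hq].
have Hp' : is_walk e x y (z1 :: p) by move: Hp; rewrite /is_walk /= exz1.
have Hq' : is_walk e x y (z2 :: q) by move: Hq; rewrite /is_walk /= exz2.
have Hpk : size (z1 :: p) <= k by rewrite /= Hps.
have Hqk : size (z2 :: q) <= k by rewrite /= Hqs.
by case: (geo Hp' Hpk Hq' Hqk).
Qed.

Lemma reachn_closed n x : 0 < n <= k -> ~~ reachn e n x x.
Proof.
case/andP=> Hn Hnk; apply/negP=> /(reachn_uniq Hnk (leq0n k)) /(_ (eqxx x)) n0.
by rewrite n0 in Hn.
Qed.

Lemma dist_reachn n x y : k < #|V| -> n <= k -> reachn e n x y ->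
  dist e x y = Some n.
Proof.
move=> Hk Hn Hr; have [m Hd Hm] := dist_leq (leq_ltn_trans Hn Hk) Hr.
by rewrite Hd (reachn_uniq (leq_trans Hm Hn) Hn (dist_Some Hd) Hr).
Qed.

Lemma ballD_subset_outliers u v u1 u2 v1 :
  outN e u = [set u1; u2] -> outN e v = [set v1; u2] -> v1 != u2 ->
  ball k.-1 v1 :\: ball k.-1 u1 \subset u |: ~: ball k u.
Proof.
move=> Hu Hv Hv12; apply/subsetP=> y; rewrite in_setD => /andP[Hyu1 /ballP[b Hb Hby]].
rewrite in_setU1 in_setC; have [// | Hyu /=] := eqVneq y u.
apply/negP=> /ballP[[|n] Hn /=]; first by rewrite eq_sym (negbTE Hyu).
case/existsP=> z /andP[euz Hzy].
have : z \in outN e u by rewrite inE.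
rewrite Hu !inE => /orP[/eqP Ez | /eqP Ez]; subst z.
  by case/negP: Hyu1; apply/ballP; exists n => //; lia.
have [evv1 evu2] := outN2_edges Hv.
have Hbk : b < k by lia.
by have := reachn_out_uniq evv1 evu2 Hbk Hn Hby Hzy; move/eqP: Hv12.
Qed.

Lemma common_out_notin_ball u v u1 u2 v1 : 0 < k ->
  e u u1 -> e u u2 -> e v v1 -> e v u2 ->
  v1 \in ball k.-1 u1 -> v \notin ball k.-1 u1.
Proof.
move=> k0 euu1 euu2 evv1 evu2 /ballP[a Ha Hu1v1]; apply/negP=> /ballP[c Hc Hu1v].
have Eac : a = c + 1.
  apply: (reachn_uniq _ _ Hu1v1 (reachn_cat Hu1v (reachn1 evv1))); lia.
have Hu1vu2 := reachn_cat Hu1v (reachn1 evu2).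
have := reachn_uniq _ _ (reachn_cat (reachn1 euu1) Hu1vu2) (reachn1 euu2); lia.
Qed.

Hypothesis direg : diregular e 2.

Lemma outN2_neq x a b : outN e x = [set a; b] -> a != b.
Proof. by move=> Hx; have := (direg x).1; rewrite Hx cards2; case: eqP. Qed.

Lemma card_sphere n x : n <= k -> #|sphere n x| = 2 ^ n.
Proof.
elim: n x => [|n IH] x Hn; first by rewrite sphere0 cards1.
have /eqP/cards2P[z1 [z2 [Hz12 Hx]]] := (direg x).1.
have [exz1 exz2] := outN2_edges Hx.
rewrite (sphereS n Hx) bigcup_setU !big_set1 cardsU !IH ?(ltnW Hn) //.
suff -> : sphere n z1 :&: sphere n z2 = set0 by rewrite cards0 subn0 expnS mul2n addnn.
apply/setP=> y; rewrite !inE; apply/negbTE/negP=> /andP[H1 H2].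
by move: Hz12; rewrite (reachn_out_uniq exz1 exz2 Hn Hn H1 H2) eqxx.
Qed.

Lemma card_ball n x : n <= k -> #|ball n x| = \sum_(i < n.+1) 2 ^ i.
Proof.
elim: n => [|n IH] Hn; first by rewrite ball0 cards1 big_ord_recr big_ord0.
rewrite ballS cardsU IH ?card_sphere ?(ltnW Hn) // [RHS]big_ord_recr /=.
suff -> : ball n x :&: sphere n.+1 x = set0 by rewrite cards0 subn0.
apply/setP=> y; rewrite in_set0 in_setI [y \in sphere _ _]inE.
apply/negbTE/negP=> /andP[/ballP[i Hi Hiy] Hy].
have := reachn_uniq _ Hn Hiy Hy; lia.
Qed.

Lemma card_ballD n x y : n <= k ->
  #|ball n x :\: ball n y| = #|ball n y :\: ball n x|.
Proof. by move=> Hn; rewrite !cardsD setIC !card_ball. Qed.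

Section Outliers.
Hypothesis order : #|V| = \sum_(i < k.+1) 2 ^ i + 3.

Lemma k_lt_order : k < #|V|.
Proof.
rewrite order; apply: ltn_addr; apply: (@leq_trans (\sum_(i < k.+1) 1)).
  by rewrite sum1_card card_ord.
by apply: leq_sum => i _; rewrite expn_gt0.
Qed.

Lemma card_outliers x : #|x |: ~: ball k x| = 4.
Proof.
rewrite cardsU1 in_setC mem_ball /=.
by have := cardsC (ball k x); rewrite card_ball // order; lia.
Qed.

Section Configuration.
Variables u v u1 u2 v1 : V.
Hypotheses (Hu : outN e u = [set u1; u2]) (Hv : outN e v = [set v1; u2]).

Lemma ballD_card_lt4 : 0 < k ->
  v1 \in ball k.-1 u1 -> #|ball k.-1 v1 :\: ball k.-1 u1| < 4.
Proof.
move=> k0 Hv1; rewrite ltnNge; apply/negP=> card4.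
have [euu1 euu2] := outN2_edges Hu; have [evv1 evu2] := outN2_edges Hv.
have sub := ballD_subset_outliers Hv Hu (outN2_neq Hu).
have full : ball k.-1 u1 :\: ball k.-1 v1 = v |: ~: ball k v.
  by apply/eqP; rewrite eqEcard sub card_outliers -card_ballD ?leq_pred.
have : v \in ball k.-1 u1 :\: ball k.-1 v1 by rewrite full setU11.
rewrite in_setD => /andP[_]; apply/negP.
exact: common_out_notin_ball euu1 euu2 evv1 evu2 Hv1.
Qed.

Lemma v1_not_closer a b w : reachn e a u1 w -> reachn e b v1 w ->
  b < a -> a < k.-1 -> False.
Proof.
move=> Ha Hb Hba Hak; set j := k - a; have k0 : 0 < k by lia.
have HX : sphere j w \subset ball k.-1 v1 :\: ball k.-1 u1.
  apply/subsetP=> y; rewrite inE => Hy; rewrite in_setD; apply/andP; split.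
    apply/negP=> /ballP[i Hi Hiy].
    have := reachn_uniq _ _ Hiy (reachn_cat Ha Hy); lia.
  by apply/ballP; exists (b + j); [lia | exact: reachn_cat Hb Hy].
have Hv1X : v1 \notin sphere j w.
  rewrite inE; apply/negP=> Hwv1; move: (reachn_cat Hb Hwv1); apply/negP.
  by apply: reachn_closed; lia.
have cardX : 4 <= #|sphere j w|.
  by rewrite card_sphere ?leq_subr // -[4]/(2 ^ 2) leq_exp2l //; lia.
have cardD : #|ball k.-1 v1 :\: ball k.-1 u1| <= 4.
  rewrite -(card_outliers u); apply: subset_leq_card.
  exact: ballD_subset_outliers Hu Hv (outN2_neq Hv).
have [Hv1 | Hv1] := boolP (v1 \in ball k.-1 u1).
  by have := ballD_card_lt4 k0 Hv1; have := subset_leq_card HX; lia.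
have : v1 |: sphere j w \subset ball k.-1 v1 :\: ball k.-1 u1.
  by rewrite subUset sub1set HX in_setD Hv1 mem_ball.
by move/subset_leq_card; rewrite cardsU1 Hv1X; lia.
Qed.

End Configuration.
End Outliers.
End Geodetic.
End Walks.

Theorem corollary1 (V : finType) (e : rel V) (k : nat) :
  3 <= k ->
  diregular e 2 ->
  k_geodetic e k ->
  #|V| = (\sum_(i < k.+1) 2 ^ i) + 3 ->
  forall u v u1 u2 v1 : V,
    u != v ->
    outN e u :&: outN e v = [set u2] ->
    outN e u = [set u1; u2] ->
    outN e v = [set v1; u2] ->
    forall w : V, w \in Tset e k v1 ->
      (w \in u |: Oset e k u)
      \/ (w \in Tset e k u1 /\ dist e u1 w = Some k.-1)
      \/ (w \in Tset e k u1 /\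
          exists a b : nat, [/\ dist e u1 w = Some a, dist e v1 w = Some b & a <= b]).
Proof.
move=> _ direg geo order u v u1 u2 v1 _ _ Hu Hv w.
have Hk := k_lt_order order.
rewrite !Tset_ball // Oset_ball // => Hw.
have [HwO | HwO] := boolP (w \in u |: ~: ball e k u); [by left | right].
have Hw1 : w \in ball e k.-1 u1.
  apply: contraR HwO => Hw1.
  apply: (subsetP (ballD_subset_outliers geo Hu Hv (outN2_neq direg Hv))).
  by rewrite in_setD Hw1 Hw.
case/ballP: (Hw1) => a Ha Hau1; case/ballP: Hw => b Hb Hbv1.
have Da := dist_reachn geo Hk (leq_trans Ha (leq_pred k)) Hau1.
have Db := dist_reachn geo Hk (leq_trans Hb (leq_pred k)) Hbv1.
have [Ea | Nea] := eqVneq a k.-1; first by left; rewrite Da Ea.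
right; split=> //; exists a, b; split=> //; rewrite leqNgt; apply/negP=> Hba.
by apply: (v1_not_closer geo direg order Hu Hv Hau1 Hbv1 Hba); rewrite ltn_neqAle Nea.
Qed.
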